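(* Let $G$ be a group and let $\{\mathrm{id}\}=H_0\subset H_1\subset\cdots\subset H_k$ be a nested sequence of subgroups of $G$. Let $A$ be a finite symmetric subset of $G$ and set $A_i:=A^2\cap H_i$ for $i=0,\dots,k$. Assume that $\langle A_{i+1}\rangle \not\subseteq A_{i+1}H_i$ for every $i=0,\dots,k-1$. Then $|A^5|\geq k|A|$.
   Context: A subset $A$ is symmetric if $\mathrm{id}\in A$ and $a^{-1}\in A$ whenever $a\in A$. $A^n$ denotes the $n$-fold product set, $\langle B\rangle$ the subgroup generated by $B$, and $A_{i+1}H_i=\{ah : a\in A_{i+1}, h\in H_i\}$. *)

From HB Require Import structures.
From mathcomp Require Import all_boot monoid finmap.

Set Implicit Arguments.
Unset Strict Implicit.
Unset Printing Implicit Defensive.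

Local Open Scope group_scope.
Local Open Scope fset_scope.

Section Defs.
Variable G : groupType.

(* Subsets of G that may be infinite (e.g. subgroups) are predicates. *)
Definition is_subgroup (H : G -> Prop) : Prop :=
  [/\ H 1, (forall x y, H x -> H y -> H (x * y)) & (forall x, H x -> H x^-1)].

Definition symmetric_set (A : {fset G}) : Prop :=
  (1 \in A) /\ (forall a, a \in A -> a^-1 \in A).

Definition fset_mul (A B : {fset G}) : {fset G} :=
  [fset a * b | a in A, b in B].

Fixpoint fset_pow (A : {fset G}) (n : nat) : {fset G} :=
  match n with
  | 0 => [fset 1]
  | 1 => A
  | m.+1 => fset_mul (fset_pow A m) A
  end.

Definition generated (B : G -> Prop) (x : G) : Prop :=
  forall S : G -> Prop, is_subgroup S -> (forall y, B y -> S y) -> S x.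

Definition set_mul (B H : G -> Prop) (x : G) : Prop :=
  exists b h, [/\ B b, H h & x = b * h].

End Defs.

(* For each i < k the hypothesis yields a, b in A^2 ∩ H_{i+1} with ab ∉ A^2 H_i:
   otherwise A_{i+1} H_i would be stable under left multiplication by A_{i+1},
   hence contain <A_{i+1}>.  Put g_i := ab.  The translate A g_i lies in A^5 and
   in A H_{i+1}, but misses A H_i, since a common element c g_i = c' h would give
   g_i = (c^-1 c') h in A^2 H_i.  The translates A g_0, ..., A g_{k-1} are thus
   pairwise disjoint subsets of A^5 of size |A|. *)
From HB Require Import structures.
From mathcomp Require Import all_boot monoid finmap.
From Stdlib Require Import Classical.

Set Implicit Arguments.
Unset Strict Implicit.
Unset Printing Implicit Defensive.

Local Open Scope group_scope.
Local Open Scope fset_scope.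

Section Generated.
Variable G : groupType.

Lemma generated_sub_mul (B K : G -> Prop) :
  is_subgroup K -> B 1 -> (forall b, B b -> B b^-1) ->
  (forall a b, B a -> B b -> set_mul B K (a * b)) ->
  forall x, generated B x -> set_mul B K x.
Proof.
move=> [K1 KM _] B1 BV BB.
have BX a y : B a -> set_mul B K y -> set_mul B K (a * y).
  move=> Ba [b [h [Bb Kh ->]]].
  have [c [h' [Bc Kh' E]]] := BB _ _ Ba Bb.
  by exists c, (h' * h); split; [| exact: KM | rewrite mulgA E mulgA].
(* S is the stabiliser of B K under left multiplication. *)
pose S x := forall y, set_mul B K y <-> set_mul B K (x * y).
have S_subgroup : is_subgroup S.
  split=> [y | x z Sx Sz y | x Sx y]; first by rewrite mul1g.
  - by rewrite -mulgA; split=> [/(Sz y)/(Sx (z * y)) | /(Sx (z * y))/(Sz y)].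
  - by rewrite -{1}(mulVKg x y) -(Sx (x^-1 * y)).
have BS a : B a -> S a.
  move=> Ba y; split; first exact: BX.
  by move=> /(BX _ _ (BV _ Ba)); rewrite mulKg.
move=> x /(_ S S_subgroup BS) /(_ 1) [+ _]; rewrite mulg1; apply.
by exists 1, 1; split; rewrite ?mulg1.
Qed.

Lemma set_mul_restrict (B K L : G -> Prop) g :
  is_subgroup L -> (forall x, K x -> L x) -> L g ->
  set_mul B K g -> set_mul (fun x => B x /\ L x) K g.
Proof.
move=> [_ LM LV] KL Lg [b [h [Bb Kh E]]]; exists b, h; split=> //; split=> //.
by rewrite -(mulgK h b) -E; apply: LM Lg (LV _ (KL _ Kh)).
Qed.

End Generated.

Section ProductSets.
Variables (G : groupType) (A : {fset G}).
Hypothesis symA : symmetric_set A.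

Lemma mem_pow2P x :
  reflect (exists a b, [/\ a \in A, b \in A & x = a * b]) (x \in fset_pow A 2).
Proof.
apply: (iffP (imfset2P _ _ _ _ _)) => [[a aA [b bA ->]] | [a [b [aA bA ->]]]].
  by exists a, b.
by exists a => //; exists b.
Qed.

Lemma mem_pow2 a b : a \in A -> b \in A -> a * b \in fset_pow A 2.
Proof. by move=> aA bA; apply/mem_pow2P; exists a, b. Qed.

Lemma pow2_1 : 1 \in fset_pow A 2.
Proof. by case: symA => A1 _; rewrite -(mulg1 1) mem_pow2. Qed.

Lemma pow2_inv x : x \in fset_pow A 2 -> x^-1 \in fset_pow A 2.
Proof.
case: symA => _ AV /mem_pow2P [a [b [aA bA ->]]].
by rewrite invgM mem_pow2 ?AV.
Qed.

Lemma translate_sub_pow5 a b :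
  a \in fset_pow A 2 -> b \in fset_pow A 2 ->
  [fset c * (a * b) | c in A] `<=` fset_pow A 5.
Proof.
move=> /mem_pow2P [a1 [a2 [a1A a2A ->]]] /mem_pow2P [b1 [b2 [b1A b2A ->]]].
apply/fsubsetP => _ /imfsetP [c /= cA ->]; rewrite !mulgA.
by do 4 apply: in_imfset2 => //=.
Qed.

Lemma card_translate g : #|` [fset c * g | c in A]| = #|` A|.
Proof. by rewrite card_imfset //; exact: mulIg. Qed.

Lemma translate_disjoint (K : G -> Prop) (T : {fset G}) g :
  (forall t, t \in T -> set_mul (fun x => x \in A) K t) ->
  ~ set_mul (fun x => x \in fset_pow A 2) K g ->
  T `&` [fset c * g | c in A] = fset0.
Proof.
move=> TAK gK; apply/eqP; rewrite -fsubset0; apply/fsubsetP => x.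
rewrite in_fsetI => /andP [/TAK [c [h [cA Kh ->]]] /imfsetP [c' /= c'A E]].
case: gK; exists (c'^-1 * c), h; split=> //.
  by case: symA => _ AV; rewrite mem_pow2 ?AV.
by rewrite -mulgA E mulKg.
Qed.

Lemma escaping_product (K L : G -> Prop) :
  is_subgroup K -> is_subgroup L -> (forall x, K x -> L x) ->
  let B := fun x => x \in fset_pow A 2 /\ L x in
  ~ (forall x, generated B x -> set_mul B K x) ->
  exists a b, [/\ a \in fset_pow A 2, b \in fset_pow A 2, L (a * b)
               & ~ set_mul (fun x => x \in fset_pow A 2) K (a * b)].
Proof.
move=> subK subL KL B not_gen; apply: NNPP => no_escape; apply: not_gen.
have [L1 LM LV] := subL.
apply: generated_sub_mul => //.
- by split; [exact: pow2_1 | exact: L1].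
- by move=> b [b2 Lb]; split; [exact: pow2_inv | exact: LV].
move=> a b [a2 La] [b2 Lb]; have Lab := LM _ _ La Lb.
apply: NNPP => not_mul; apply: no_escape; exists a, b; split=> //.
by move=> /(set_mul_restrict subL KL Lab).
Qed.

Lemma pow5_card_chain k (H : nat -> G -> Prop) :
  (forall i, i < k -> forall x, H i x -> H i.+1 x) ->
  (forall i, i < k -> exists a b,
     [/\ a \in fset_pow A 2, b \in fset_pow A 2, H i.+1 (a * b)
       & ~ set_mul (fun x => x \in fset_pow A 2) (H i) (a * b)]) ->
  (k * #|` A| <= #|` fset_pow A 5|)%N.
Proof.
move=> Hinc escape.
suff /(_ k (leqnn k)) [T [TA5 cardT _]] : forall n, n <= k -> exists T : {fset G},
    [/\ T `<=` fset_pow A 5, (n * #|` A| <= #|` T|)%N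
      & forall t, t \in T -> set_mul (fun x => x \in A) (H n) t].
  exact: leq_trans cardT (fsubset_leq_card TA5).
elim=> [_ | n IH nk]; first by exists fset0; split=> // t; rewrite in_fset0.
have [T [TA5 cardT TAH]] := IH (ltnW nk).
have [a [b [a2 b2 Hab gesc]]] := escape n nk.
exists (T `|` [fset c * (a * b) | c in A]); split.
- by rewrite fsubUset TA5 translate_sub_pow5.
- have := cardfsUI T [fset c * (a * b) | c in A].
  rewrite (translate_disjoint TAH gesc) cardfs0 addn0 card_translate => ->.
  by rewrite mulSn addnC leq_add2r.
- move=> t; rewrite in_fsetU => /orP [/TAH [c [h [cA Hh ->]]] | ].
    by exists c, h; split=> //; apply: Hinc.
  by move=> /imfsetP [c /= cA ->]; exists c, (a * b).
Qed.

End ProductSets.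

Theorem lemma3p1 (G : groupType) (k : nat) (H : nat -> G -> Prop)
    (A : {fset G}) :
  (forall i, i <= k -> is_subgroup (H i)) ->
  (forall x, H 0 x <-> x = 1) ->
  (forall i, i < k -> forall x, H i x -> H i.+1 x) ->
  symmetric_set A ->
  (let Ai i := fun x => x \in fset_pow A 2 /\ H i x in
   forall i, i < k ->
     ~ (forall x, generated (Ai i.+1) x -> set_mul (Ai i.+1) (H i) x)) ->
  (k * #|` A| <= #|` fset_pow A 5|)%N.
Proof.
move=> subH _ Hinc symA not_gen.
apply: (pow5_card_chain symA Hinc) => i ik.
apply: (escaping_product symA (subH i (ltnW ik)) (subH i.+1 ik) (Hinc i ik)).
exact: not_gen.
Qed.
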